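(* Suppose Assumptions 1 and 2 (stated in the context) hold, and let $\mu^*$ be an equilibrium sorting such that for every $x_1\in I_{x_1}$ there exists $x_2^*(x_1)$ with $\mu^*_1(x_1,x_2^*(x_1))=x_1$. Then the equilibrium payoff function $u^*$ and wage function $w^*$ are $$u^*(\mathbf{x})=\tfrac12F(x_1,x_1)+\int_{x_2^*(x_1)}^{x_2}(s-x_2)(1+2s)^{-1}\,\mathrm{d}F(x_1,\mu^*_1(x_1,s)),$$ $$w^*(\mathbf{x})=\tfrac12F(x_1,x_1)+\int_{x_2^*(x_1)}^{x_2}s(1+2s)^{-1}\,\mathrm{d}F(x_1,\mu^*_1(x_1,s)),$$ for $\mathbf{x}=(x_1,x_2)$, where the integrals are Stieltjes integrals in $s$.
   Context: Model. A continuum of workers has types $\mathbf{x}=(x_1,x_2)\in I_{\mathbf{x}}=I_{x_1}\times I_{x_2}$ ($I_{x_1},I_{x_2}\subset\mathbb{R}$ closed), $x_1$ skill, $x_2$ strength of relative concerns, $\min I_{x_2}>-1/2$; types $\sim H$ with full support, marginals $H_{x_1},H_{x_2}$, $\Pr(X_2\le x_2\mid X_1=x_1)$ absolutely continuous in $x_2$. Teams of two with skills $x_1^k,x_1^j$ produce $F(x_1^k,x_1^j)$ ($F$ symmetric, increasing, twice continuously differentiable), split into wages $w^k+w^j=F(x_1^k,x_1^j)$. Utility of worker $\mathbf{x}^k$: $U(w^k,w^j;x_2^k)=w^k+x_2^k(w^k-w^j)$; outside options strictly below $F(x_1,x_1)/2$. Frontier $\psi(\mathbf{x}^j,\mathbf{x}^k,u)=\max_{w^j}U(F(x_1^k,x_1^j)-w^j,w^j;x_2^k)$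 s.t. $U(w^j,F(x_1^k,x_1^j)-w^j;x_2^j)\ge u$. A sorting is $\mu=(\mu_1,\mu_2):I_{\mathbf{x}}\to I_{\mathbf{x}}$ with $\mu(\mu(\mathbf{x}))=\mathbf{x}$, feasible if $\mu(\mathbf{X})\sim H$; individually rational given payoffs $u$ if $\mu(\mathbf{x}^k)=\mathbf{x}^j\Rightarrow\mathbf{x}^j\in\arg\max_{\mathbf{x}}\psi(\mathbf{x}^k,\mathbf{x},u(\mathbf{x}))$. A competitive equilibrium $(\mu^*,u^* )$: $\mu^*$ feasible and individually rational given $u^*$, and $u^*(\mathbf{x}^k)=\max_{\mathbf{x}^j}\psi(\mathbf{x}^j,\mathbf{x}^k,u^*(\mathbf{x}^j))$. The equilibrium wage $w^*(\mathbf{x})$ is defined by $u^*(\mathbf{x})=(1+2x_2)w^*(\mathbf{x})-x_2F(x_1,\mu^*_1(\mathbf{x}))$ (co-workers' wages sum to output). Assumption 1: With $L(\mathbf{x}^k;x_1',x_1)=(F(x_1^k,x_1')-F(x_1^k,x_1))(1+2x_2^k)^{-1}$ and $V(l;x_1',x_1)=\Pr(L(\mathbf{X};x_1',x_1)\le l)$, for all $x_1'''>x_1''$, $x_1'>x_1$ and all $\mathbf{x}^k$: $V(L(\mathbf{x}^k;x_1''',x_1'');x_1''',x_1'')=V(L(\mathbf{x}^k;x_1',x_1);x_1',x_1)=:v_1(\mathbf{x}^k)$. Assumption 2: there is an exchangeable copula $C$ ($C(u,v)=C(v,u)$) of $(X_1,v_1(\mathbf{X}))$, where a copula of $(Y_1,Y_2)$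 is a supermodular $C:[0,1]^2\to[0,1]$ with uniform margins and $C(\Pr(Y_1\le y_1),\Pr(Y_2\le y_2))=\Pr(Y_1\le y_1,Y_2\le y_2)$. *)

From HB Require Import structures.
From mathcomp Require Import all_boot all_order all_algebra.
From mathcomp Require Import all_classical all_reals all_analysis.
Set Implicit Arguments. Unset Strict Implicit. Unset Printing Implicit Defensive.
Import Order.TTheory GRing.Theory Num.Theory.
Import numFieldNormedType.Exports.
Local Open Scope classical_set_scope.
Local Open Scope ring_scope.

Section Model.
Variable R : realType.

Definition closed_interval (I : set R) : Prop :=
  closed I /\ I !=set0 /\ (forall x y z, I x -> I z -> x <= y <= z -> I y).

Definition U (wk wj x2 : R) : R := wk + x2 * (wk - wj).

(** frontier psi(x^j, x^k, u) = max_{w^j} U(F - w^j, w^j; x_2^k)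
    s.t. U(w^j, F - w^j; x_2^j) >= u *)
Definition frontier (F : R -> R -> R) (xj xk : R * R) (u : R) : R :=
  sup [set U (F xk.1 xj.1 - wj) wj xk.2 |
        wj in [set wj | u <= U wj (F xk.1 xj.1 - wj) xj.2]].

Definition sorting (I : set (R * R)) (mu : R * R -> R * R) : Prop :=
  (forall x, I x -> I (mu x)) /\ (forall x, I x -> mu (mu x) = x).

Definition feasible (H : probability (R * R)%type R) (mu : R * R -> R * R) :
  Prop :=
  measurable_fun setT mu /\
  forall A : set (R * R), measurable A -> H (mu @^-1` A) = H A.

Definition individually_rational (I : set (R * R)) (F : R -> R -> R)
  (mu : R * R -> R * R) (u : R * R -> R) : Prop :=
  forall xk xj, I xk -> mu xk = xj ->
    I xj /\ forall x, I x -> frontier F x xk (u x) <= frontier F xj xk (u xj).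

Definition competitive_equilibrium (H : probability (R * R)%type R)
  (I : set (R * R)) (F : R -> R -> R) (mu : R * R -> R * R) (u : R * R -> R)
  : Prop :=
  [/\ sorting I mu, feasible H mu, individually_rational I F mu u &
      forall xk, I xk ->
        (forall xj, I xj -> frontier F xj xk (u xj) <= u xk) /\
        exists2 xj, I xj & frontier F xj xk (u xj) = u xk].

Definition full_support (H : probability (R * R)%type R) (I : set (R * R)) :
  Prop :=
  H (~` I) = 0%E /\
  forall x, I x -> forall O : set (R * R), open O -> O x -> (0 < H O)%E.

Definition abs_continuous_fun (f : R -> R) : Prop :=
  forall e : R, 0 < e -> exists2 d : R, 0 < d &
    forall (n : nat) (a b : nat -> R),
      (forall i, (i < n)%N -> a i <= b i) ->
      (forall i j, (i < n)%N -> (j < n)%N -> i <> j -> b i <= a j \/ b j <= a i) ->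
      \sum_(i < n) (b i - a i) < d ->
      \sum_(i < n) `|f (b i) - f (a i)| < e.

(** Pr(X_2 <= x_2 | X_1 = x_1) is absolutely continuous in x_2 (for a
    version K of the regular conditional distribution of X_2 given X_1) *)
Definition cond_cdf_abs_continuous (H : probability (R * R)%type R)
  (I1 : set R) : Prop :=
  exists K : R.-pker R ~> R,
    (forall (A B : set R), measurable A -> measurable B ->
       H (A `*` B) = (\int[H]_(x in A `*` setT) K x.1 B)%E) /\
    (forall x1, I1 x1 -> abs_continuous_fun (fun x2 => fine (K x1 [set y | y <= x2]))).

Definition d1 (F : R -> R -> R) : R -> R -> R :=
  fun x y => derive1 (fun t => F t y) x.
Definition d2 (F : R -> R -> R) : R -> R -> R :=
  fun x y => derive1 (fun t => F x t) y.
Definition C1 (F : R -> R -> R) : Prop :=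
  (forall x y, derivable (fun t => F t y) x 1 /\ derivable (fun t => F x t) y 1) /\
  continuous (fun p : R * R => F p.1 p.2) /\
  continuous (fun p : R * R => d1 F p.1 p.2) /\
  continuous (fun p : R * R => d2 F p.1 p.2).
Definition C2 (F : R -> R -> R) : Prop := [/\ C1 F, C1 (d1 F) & C1 (d2 F)].

Definition symmetric_prod (F : R -> R -> R) : Prop := forall a b, F a b = F b a.
Definition increasing_prod (F : R -> R -> R) : Prop :=
  forall a b c, a < b -> F a c < F b c /\ F c a < F c b.

Definition Lfun (F : R -> R -> R) (xk : R * R) (a' a : R) : R :=
  (F xk.1 a' - F xk.1 a) / (1 + 2 * xk.2).
Definition Vfun (H : probability (R * R)%type R) (F : R -> R -> R)
  (l a' a : R) : R := fine (H [set x | Lfun F x a' a <= l]).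

Definition assumption1 (H : probability (R * R)%type R) (I1 I2 : set R)
  (F : R -> R -> R) : Prop :=
  forall a a' b b', I1 a -> I1 a' -> I1 b -> I1 b' -> a < a' -> b < b' ->
  forall xk, (I1 `*` I2) xk ->
    Vfun H F (Lfun F xk b' b) b' b = Vfun H F (Lfun F xk a' a) a' a.

Definition copula (C : R -> R -> R) : Prop :=
  [/\ (forall u v, 0 <= u <= 1 -> 0 <= v <= 1 -> 0 <= C u v <= 1),
      (forall u u' v v', 0 <= u -> u <= u' -> u' <= 1 -> 0 <= v -> v <= v' ->
         v' <= 1 -> C u' v + C u v' <= C u' v' + C u v) &
      (forall u, 0 <= u <= 1 -> C u 1 = u /\ C 1 u = u)].

(** Assumption 2 (v1 is the common value from Assumption 1) *)
Definition assumption2 (H : probability (R * R)%type R) (I1 I2 : set R)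
  (F : R -> R -> R) : Prop :=
  exists v1 : R * R -> R,
    (forall x a a', (I1 `*` I2) x -> I1 a -> I1 a' -> a < a' ->
       v1 x = Vfun H F (Lfun F x a' a) a' a) /\
    exists C : R -> R -> R,
      [/\ copula C, (forall u v, C u v = C v u) &
        forall y1 y2 : R,
          C (fine (H [set x | x.1 <= y1])) (fine (H [set x | v1 x <= y2]))
          = fine (H [set x | x.1 <= y1 /\ v1 x <= y2])].

(** Riemann--Stieltjes integral  int_a^b g(s) dG(s)  (oriented) *)
Definition RS_sum (g G : R -> R) (n : nat) (t xi : nat -> R) : R :=
  \sum_(i < n) g (xi i) * (G (t i.+1) - G (t i)).
Definition tagged_partition (a b : R) (n : nat) (t xi : nat -> R) : Prop :=
  [/\ t 0%N = a, t n = b & forall i, (i < n)%N -> t i <= xi i <= t i.+1].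
Definition RS_integral_on (g G : R -> R) (a b v : R) : Prop :=
  forall e : R, 0 < e -> exists2 d : R, 0 < d &
    forall n t xi, tagged_partition a b n t xi ->
      (forall i, (i < n)%N -> t i.+1 - t i < d) ->
      `|RS_sum g G n t xi - v| < e.
Definition is_RS_integral (g G : R -> R) (a b v : R) : Prop :=
  if a <= b then RS_integral_on g G a b v else RS_integral_on g G b a (- v).

End Model.

(* Stability of the equilibrium lets a worker (x1, r) poach
   the partner of (x1, s) by offering that partner the same utility; hence
   s |-> u(x1, s) is convex with subgradient B(s) = 2 w(x1, s) - F(x1, mu1(x1, s)).
   The wage identity u = (1 + 2 x2) w - x2 F turns the integrator into
   F(x1, mu1(x1, s)) = 2 u - (1 + 2 s) B, i.e. formally dF = -(1 + 2 s) dB, so the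
   integral of (s - c) / (1 + 2 s) dF telescopes to u - (s - c) B (take c = x2 for
   u and c = 0 for w).  At the self-matched type x2*(x1) both co-workers need at
   least F(x1, x1) / 2 and share F(x1, x1), so there u = w = F(x1, x1) / 2 and B = 0. *)

From HB Require Import structures.
From mathcomp Require Import all_boot all_order all_algebra.
From mathcomp Require Import all_classical all_reals all_analysis.
From mathcomp Require Import ring lra.
Import Order.TTheory GRing.Theory Num.Theory.
Import numFieldNormedType.Exports.
Local Open Scope classical_set_scope.
Local Open Scope ring_scope.

Section RiemannStieltjes.
Set Implicit Arguments.
Unset Strict Implicit.
Context {R : realType}.
Implicit Types (a b : R) (g G : R -> R).

Lemma tagged_partition_itv a b n t xi :
  tagged_partition a b n t xi -> forall i, (i <= n)%N -> a <= t i <= b.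
Proof.
case=> t0 tn txi i ilen.
have t_mono : {in [pred i | (i <= n)%N] &, {homo t : i j / (i <= j)%N >-> i <= j}}.
  apply: Order.NatMonotonyTheory.nondecn_inP => [j k _ kn l /andP[_ lk]|j _ jn].
    by rewrite inE (leq_trans (ltnW lk)).
  by have /andP[+ +] := txi j jn; apply: le_trans.
by rewrite -t0 -tn !t_mono ?inE.
Qed.

Lemma telescope_sumr_ord n (f : nat -> R) :
  \sum_(i < n) (f i.+1 - f i) = f n - f 0%N.
Proof. by rewrite -(big_mkord xpredT (fun i => f i.+1 - f i)) telescope_sumr. Qed.

Lemma RS_integral_on_of_cell_bound g G (Psi B : R -> R) a b (K : R) :
  a <= b -> 0 <= K ->
  (forall p q, a <= p -> p <= q -> q <= b -> B p <= B q) ->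
  (forall p x q, a <= p -> p <= x -> x <= q -> q <= b ->
     `|g x * (G q - G p) - (Psi q - Psi p)| <= K * (q - p) * (B q - B p)) ->
  RS_integral_on g G a b (Psi b - Psi a).
Proof.
move=> ab K0 B_mono cell e e0.
have KV0 : 0 <= K * (B b - B a) by rewrite mulr_ge0 // subr_ge0 B_mono.
have KV1 : 0 < K * (B b - B a) + 1 by rewrite ltr_wpDl.
exists (e / (K * (B b - B a) + 1)); first by rewrite divr_gt0.
move=> n t xi tp mesh; have t_itv := tagged_partition_itv tp.
case: tp => t0 tn txi.
have cell_mesh i : (i < n)%N ->
    `|g (xi i) * (G (t i.+1) - G (t i)) - (Psi (t i.+1) - Psi (t i))|
    <= K * (e / (K * (B b - B a) + 1)) * (B (t i.+1) - B (t i)).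
  move=> ilt; have /andP[ta _] := t_itv i (ltnW ilt).
  have /andP[_ tb] := t_itv _ ilt; have /andP[tx xt] := txi i ilt.
  apply: le_trans (cell _ _ _ ta tx xt tb) _.
  rewrite ler_pM ?mulr_ge0 ?subr_ge0 ?(le_trans tx xt) //.
    by rewrite B_mono // (le_trans tx xt).
  exact/(ler_wpM2l K0)/ltW/mesh.
rewrite /RS_sum -t0 -tn -(telescope_sumr_ord n (fun i => Psi (t i))) -sumrB.
apply: le_lt_trans (ler_norm_sum _ _ _) _.
apply: le_lt_trans; first by apply: ler_sum => i _; apply: cell_mesh.
rewrite -mulr_sumr (telescope_sumr_ord n (fun i => B (t i))) /= t0 tn.
by rewrite mulrAC mulrCA gtr_pMr // ltr_pdivrMr // mul1r ltrDl.
Qed.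

Definition subgradient_on (J : set R) (u B : R -> R) :=
  forall s r, J s -> J r -> u s + (r - s) * B s <= u r.

Lemma subgradient_nondecreasing J u B p q :
  subgradient_on J u B -> J p -> J q -> p <= q -> B p <= B q.
Proof.
move=> sub Jp Jq; rewrite le_eqVlt => /predU1P[-> //|pq].
have := sub p q Jp Jq; have := sub q p Jq Jp; nra.
Qed.

Lemma subgradient_cell_bound J u B p x q :
  subgradient_on J u B -> J p -> J q -> p <= x -> x <= q ->
  `|(q - x) * B q + (x - p) * B p - (u q - u p)| <= (q - p) * (B q - B p).
Proof.
move=> sub Jp Jq px xq; have Bpq := subgradient_nondecreasing sub Jp Jq (le_trans px xq).
have := sub p q Jp Jq; have := sub q p Jq Jp.
rewrite ler_norml; move=> h1 h2; apply/andP; split; nra.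
Qed.

Lemma RS_integral_on_subgradient J (m c a b : R) u B G :
  is_interval J -> (forall s, J s -> m <= s) -> 0 < 1 + 2 * m ->
  J a -> J b -> a <= b -> subgradient_on J u B ->
  (forall s, J s -> G s = 2 * u s - (1 + 2 * s) * B s) ->
  RS_integral_on (fun s => (s - c) / (1 + 2 * s)) G a b
    ((u b - (b - c) * B b) - (u a - (a - c) * B a)).
Proof.
move=> itvJ Jm m_pos Ja Jb ab sub GE.
have J_ab p : a <= p -> p <= b -> J p by move=> ap pb; apply: itvJ Ja Jb _ _; rewrite ap.
apply: (@RS_integral_on_of_cell_bound _ _ (fun s => u s - (s - c) * B s) B _ _
  (`|1 + 2 * c| / (1 + 2 * m))) => //.
- by rewrite divr_ge0 // ltW.
- by move=> p q ap pq qb; apply: (subgradient_nondecreasing sub _ _ pq); apply: J_ab; lra.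
move=> p x q ap px xq qb.
have Jp : J p by apply: J_ab; lra.
have Jq : J q by apply: J_ab; lra.
have x_pos : 0 < 1 + 2 * x by have := Jm p Jp; lra.
(* the Riemann--Stieltjes cell error is a multiple of the convexity defect *)
have -> : (x - c) / (1 + 2 * x) * (G q - G p)
    - ((u q - (q - c) * B q) - (u p - (p - c) * B p))
    = (1 + 2 * c) / (1 + 2 * x) * ((q - x) * B q + (x - p) * B p - (u q - u p)).
  by rewrite !GE //; field; rewrite gt_eqF.
rewrite normrM -mulrA; apply: ler_pM => //.
- rewrite normrM normfV (gtr0_norm x_pos) ler_wpM2l //.
  by rewrite lef_pV2 ?posrE //; have := Jm p Jp; lra.
exact: subgradient_cell_bound sub Jp Jq px xq.
Qed.

Lemma is_RS_integral_subgradient J (m c a b : R) u B G :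
  is_interval J -> (forall s, J s -> m <= s) -> 0 < 1 + 2 * m ->
  J a -> J b -> subgradient_on J u B ->
  (forall s, J s -> G s = 2 * u s - (1 + 2 * s) * B s) ->
  is_RS_integral (fun s => (s - c) / (1 + 2 * s)) G a b
    ((u b - (b - c) * B b) - (u a - (a - c) * B a)).
Proof.
move=> itvJ Jm m_pos Ja Jb sub GE; rewrite /is_RS_integral.
have [ab|/ltW ba] := leP a b.
  exact: (RS_integral_on_subgradient c itvJ Jm m_pos Ja Jb ab sub GE).
rewrite opprB; exact: (RS_integral_on_subgradient c itvJ Jm m_pos Jb Ja ba sub GE).
Qed.

End RiemannStieltjes.

Section Frontier.
Context {R : realType}.
Implicit Types (F : R -> R -> R) (x xj xk : R * R) (v : R).

Lemma frontierE F xj xk v : 0 < 1 + 2 * xj.2 -> 0 < 1 + 2 * xk.2 ->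
  frontier F xj xk v = (1 + xk.2) * F xk.1 xj.1
     - (1 + 2 * xk.2) * ((v + xj.2 * F xk.1 xj.1) / (1 + 2 * xj.2)).
Proof.
move=> xj_pos xk_pos; rewrite /frontier.
set a := F xk.1 xj.1; set phi := (v + xj.2 * a) / (1 + 2 * xj.2).
(* [phi] is the least wage meeting the participation constraint of [xj] *)
have phi_feasible : U phi (a - phi) xj.2 = v.
  by rewrite /U /phi; field; rewrite gt_eqF.
have phi_le wj : v <= U wj (a - wj) xj.2 -> phi <= wj.
  by rewrite /phi ler_pdivrMr // /U => h; nra.
have phi_max y : [set U (a - wj) wj xk.2 | wj in [set wj | v <= U wj (a - wj) xj.2]] y ->
    y <= U (a - phi) phi xk.2.
  by case=> wj /phi_le phi_wj <-; rewrite /U; nra.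
have -> : (1 + xk.2) * a - (1 + 2 * xk.2) * phi = U (a - phi) phi xk.2 by rewrite /U; ring.
apply/le_anti/andP; split.
  by apply: ge_sup => //; exists (U (a - phi) phi xk.2), phi; rewrite /= ?phi_feasible.
by apply: ub_le_sup; [exists (U (a - phi) phi xk.2) | exists phi; rewrite /= ?phi_feasible].
Qed.

Lemma frontier_self F x v : 0 < 1 + 2 * x.2 -> frontier F x x v = F x.1 x.1 - v.
Proof. by move=> x_pos; rewrite frontierE //; field; rewrite gt_eqF. Qed.

End Frontier.

Section Equilibrium.
Context {R : realType} (H : probability (R * R)%type R) (I : set (R * R)).
Context (F : R -> R -> R) (mu : R * R -> R * R) (u w : R * R -> R).
Hypothesis F_sym : symmetric_prod F.
Hypothesis eq_mu_u : competitive_equilibrium H I F mu u.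
Hypothesis I_pos : forall x, I x -> 0 < 1 + 2 * x.2.
Hypothesis payoff_wage : forall x, I x -> u x = (1 + 2 * x.2) * w x - x.2 * F x.1 (mu x).1.

Lemma mu_in x : I x -> I (mu x).
Proof. by case: eq_mu_u => -[mu_I _] _ _ _; apply: mu_I. Qed.

Lemma muK x : I x -> mu (mu x) = x.
Proof. by case: eq_mu_u => -[_ mu_mu] _ _ _; apply: mu_mu. Qed.

Lemma payoff_ge_frontier x y : I x -> I y -> frontier F y x (u y) <= u x.
Proof. by case: eq_mu_u => _ _ _ opt Ix; apply: (opt x Ix).1. Qed.

Lemma payoff_partnerE x : I x -> u x = frontier F (mu x) x (u (mu x)).
Proof.
case: eq_mu_u => _ _ rational opt Ix; have [u_ge [y Iy yE]] := opt x Ix.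
have [mu_x_I best] := rational x (mu x) Ix erefl.
by apply/le_anti/andP; split; [rewrite -yE best | apply: u_ge].
Qed.

Lemma partner_wageE x : I x ->
  w (mu x) = (u (mu x) + (mu x).2 * F x.1 (mu x).1) / (1 + 2 * (mu x).2).
Proof.
move=> Ix; have mu_x_pos := I_pos (mu_in Ix).
rewrite payoff_wage ?muK //; last exact: mu_in.
by rewrite [F x.1 _]F_sym; field; rewrite gt_eqF.
Qed.

Lemma frontier_partnerE x y : I x -> I y -> y.1 = x.1 ->
  frontier F (mu x) y (u (mu x)) = (1 + y.2) * F x.1 (mu x).1 - (1 + 2 * y.2) * w (mu x).
Proof.
move=> Ix Iy yx; have mu_x_pos := I_pos (mu_in Ix); have y_pos := I_pos Iy.
by rewrite frontierE // partner_wageE // yx.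
Qed.

Lemma wage_add_partner x : I x -> w x + w (mu x) = F x.1 (mu x).1.
Proof.
move=> Ix; have := payoff_partnerE Ix; rewrite frontier_partnerE // payoff_wage //.
have x_pos := I_pos Ix => uE; apply: (mulfI (lt0r_neq0 x_pos)); lra.
Qed.

Lemma payoff_ge_mimic x y : I x -> I y -> y.1 = x.1 ->
  (1 + 2 * y.2) * w x - y.2 * F x.1 (mu x).1 <= u y.
Proof.
move=> Ix Iy yx; apply: le_trans (payoff_ge_frontier Iy (mu_in Ix)).
by rewrite frontier_partnerE // -(wage_add_partner Ix); lra.
Qed.

Lemma payoff_subgradient (J : set R) x1 : (forall s, J s -> I (x1, s)) ->
  subgradient_on J (fun s => u (x1, s)) (fun s => 2 * w (x1, s) - F x1 (mu (x1, s)).1).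
Proof.
move=> JI s r Js Jr; have := payoff_ge_mimic (JI s Js) (JI r Jr) erefl.
by rewrite [u (x1, s)]payoff_wage /=; [lra | exact: JI].
Qed.

Lemma half_self_output_le_payoff x : I x -> F x.1 x.1 / 2 <= u x.
Proof.
by move=> Ix; have := payoff_ge_frontier Ix Ix; rewrite frontier_self ?I_pos //; lra.
Qed.

Lemma half_self_output_le_wage x : I x -> (mu x).1 = x.1 -> F x.1 x.1 / 2 <= w x.
Proof.
move=> Ix self; have := half_self_output_le_payoff Ix.
by rewrite payoff_wage // self; have := I_pos Ix; nra.
Qed.

Lemma self_matched_payoff x : I x -> (mu x).1 = x.1 ->
  u x = F x.1 x.1 / 2 /\ w x = F x.1 x.1 / 2.
Proof.
move=> Ix self; have mu_self : (mu (mu x)).1 = (mu x).1 by rewrite muK.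
have := half_self_output_le_wage (mu_in Ix) mu_self.
have := half_self_output_le_wage Ix self; have := wage_add_partner Ix.
rewrite payoff_wage // self => w_add w_ge w_mu_ge.
have wE : w x = F x.1 x.1 / 2 by lra.
by rewrite wE; split => //; field.
Qed.

End Equilibrium.

Theorem proposition3 (R : realType) (I1 I2 : set R)
  (H : probability (R * R)%type R) (F : R -> R -> R) (o : R * R -> R)
  (mu : R * R -> R * R) (u w : R * R -> R) (x2star : R -> R) :
  closed_interval I1 -> closed_interval I2 ->
  (exists m, [/\ I2 m, -(1/2) < m & forall y, I2 y -> m <= y]) ->
  full_support H (I1 `*` I2) ->
  cond_cdf_abs_continuous H I1 ->
  symmetric_prod F -> increasing_prod F -> C2 F ->
  (forall x, (I1 `*` I2) x -> o x < F x.1 x.1 / 2) ->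
  assumption1 H I1 I2 F ->
  assumption2 H I1 I2 F ->
  competitive_equilibrium H (I1 `*` I2) F mu u ->
  (forall x1, I1 x1 -> I2 (x2star x1) /\ (mu (x1, x2star x1)).1 = x1) ->
  (forall x, (I1 `*` I2) x -> u x = (1 + 2 * x.2) * w x - x.2 * F x.1 (mu x).1) ->
  forall x, (I1 `*` I2) x ->
    (exists v, is_RS_integral (fun s => (s - x.2) / (1 + 2 * s))
                 (fun s => F x.1 (mu (x.1, s)).1) (x2star x.1) x.2 v /\
               u x = F x.1 x.1 / 2 + v) /\
    (exists v, is_RS_integral (fun s => s / (1 + 2 * s))
                 (fun s => F x.1 (mu (x.1, s)).1) (x2star x.1) x.2 v /\
               w x = F x.1 x.1 / 2 + v).
Proof.
move=> _ [_ [_ I2_convex]] [m [_ m_gt I2_ge_m]] _ _ F_sym _ _ _ _ _ eqm x2star_self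
  payoff_wage [x1 x2] [/= I1x1 I2x2].
have I_pos x : (I1 `*` I2) x -> 0 < 1 + 2 * x.2 by case=> _ /I2_ge_m; lra.
have I2_itv : is_interval I2 by move=> a b Ia Ib z; apply: I2_convex.
have [I2a0 a0_self] := x2star_self x1 I1x1; set a0 := x2star x1 in I2a0 a0_self *.
have Ia0 : (I1 `*` I2) (x1, a0) by [].
have [ua0 wa0] := self_matched_payoff F_sym eqm I_pos payoff_wage Ia0 a0_self.
set B := fun s => 2 * w (x1, s) - F x1 (mu (x1, s)).1.
have sub : subgradient_on I2 (fun s => u (x1, s)) B.
  by apply: (payoff_subgradient F_sym eqm I_pos payoff_wage) => s; split.
have GE s : I2 s -> F x1 (mu (x1, s)).1 = 2 * u (x1, s) - (1 + 2 * s) * B s.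
  by move=> I2s; rewrite payoff_wage //= /B; ring.
have B_a0 : B a0 = 0 by rewrite /B wa0 a0_self /=; lra.
have m_pos : 0 < 1 + 2 * m by lra.
have integral c := is_RS_integral_subgradient c I2_itv I2_ge_m m_pos I2a0 I2x2 sub GE.
split; eexists; split.
- exact: integral x2.
- by rewrite ua0 B_a0 /=; ring.
- have -> : (fun s : R => s / (1 + 2 * s)) = (fun s => (s - 0) / (1 + 2 * s)).
    by apply: funext => s; rewrite subr0.
  exact: integral 0.
- by rewrite ua0 B_a0 /B payoff_wage //=; ring.
Qed.
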